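(* Every Move-To-Front-Every-Other-Access algorithm $A$ (for any choice of initial bits) has competitive ratio at most $2.5$: there is a constant $b$ (depending only on the list length) such that $A(\sigma)\le 2.5\cdot\mathrm{OPT}(\sigma)+b$ for every request sequence $\sigma$, in both the partial and the full cost model.
   Context: Static list update: a list of $l$ distinct items in some initial order; serving a request to the item at position $i$ (from the front) costs $i$ in the full cost model and $i-1$ in the partial cost model; the accessed item may be moved closer to the front for free (free exchange); two adjacent items may be swapped at cost $1$ (paid exchange). $A(\sigma)$ is the total cost of algorithm $A$ and $\mathrm{OPT}(\sigma)$ the minimum cost of any offline algorithm from the same initial list (in the same cost model). A Move-To-Front-Every-Other-Access (MTF2) algorithm maintains one bit per item, with arbitrary initial values; on each request to an item $z$ it flips the bit of $z$, and if the bit becomes $0$ it moves $z$ to the front (free exchange), otherwise it leaves the list unchanged; it makes no paid exchanges. *)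

From HB Require Import structures.
From mathcomp Require Import all_boot all_order all_algebra.
From Stdlib Require Import ClassicalEpsilon.
Set Implicit Arguments. Unset Strict Implicit. Unset Printing Implicit Defensive.

Section ListUpdate.
Variable T : eqType.

(* Cost of serving a request to x in list L: position from the front is
   index x L + 1; full model pays that, partial model pays one less. *)
Definition access_cost (full : bool) (x : T) (L : seq T) : nat :=
  index x L + full.

(* Paid exchange: swap the items at (0-based) positions j and j+1
   (no-op if position j+1 does not exist; still costs 1). *)
Definition swap_adj (L : seq T) (j : nat) : seq T :=
  match drop j L with
  | a :: b :: r => take j L ++ b :: a :: r
  | _ => L
  end.

Definition move_to (x : T) (k : nat) (L : seq T) : seq T :=
  let L' := rem x L in take k L' ++ x :: drop k L'.

(* An offline step: a list of paid adjacent exchanges performed before the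
   access, and a target position k for the free exchange after the access
   (the accessed item goes to position min k (its current position), i.e.
   it can only be moved closer to the front). *)
Definition step := (seq nat * nat)%type.

Fixpoint off_cost (full : bool) (S : nat -> step) (t : nat) (L : seq T)
    (sigma : seq T) : nat :=
  match sigma with
  | [::] => 0
  | x :: sigma' =>
      let L1 := foldl swap_adj L (S t).1 in
      size (S t).1 + access_cost full x L1 +
      off_cost full S t.+1 (move_to x (minn (S t).2 (index x L1)) L1) sigma'
  end.

Definition achievable (full : bool) (L : seq T) (sigma : seq T) (n : nat) : Prop :=
  exists S : nat -> step, off_cost full S 0 L sigma = n.

Definition achievableb full L sigma (n : nat) : bool :=
  if excluded_middle_informative (achievable full L sigma n) then true else false.

Lemma achievable_exists full L sigma : exists n, achievableb full L sigma n.
Proof.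
exists (off_cost full (fun _ => ([::], 0)) 0 L sigma).
rewrite /achievableb; case: excluded_middle_informative => // H.
by exfalso; apply: H; exists (fun _ => ([::], 0)).
Qed.

Definition OPT (full : bool) (L : seq T) (sigma : seq T) : nat :=
  ex_minn (achievable_exists full L sigma).

Fixpoint mtf2_cost (full : bool) (L : seq T) (bits : T -> bool)
    (sigma : seq T) : nat :=
  match sigma with
  | [::] => 0
  | x :: sigma' =>
      let b := ~~ bits x in
      let bits' := fun y => if y == x then b else bits y in
      access_cost full x L +
      mtf2_cost full (if b then L else move_to x 0 L) bits' sigma'
  end.

End ListUpdate.

From HB Require Import structures.
From mathcomp Require Import all_boot all_order all_algebra.
From mathcomp Require Import zify lra.
From Stdlib Require Import ClassicalEpsilon.
Set Implicit Arguments. Unset Strict Implicit. Unset Printing Implicit Defensive.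

(* Run MTF2 (list LA) and an optimal offline algorithm (list LO) side by side
   on the same items s.  Every ordered pair (x, y) with x in front of y in LA
   carries a weight: if y is in front of x in LO (an inversion) the weight is
   4 + bit x - 2 bit y, otherwise it is bit y; the potential Phi is the total
   weight, so 0 <= Phi <= 5 |s|^2.  Two facts are established:
   - a paid exchange of OFF changes the relative order of a single pair, hence
     raises Phi by at most 5 (Phi_swap);
   - on an access to z, 2 * (MTF2's cost) + (change of Phi) is at most
     5 * (OFF's cost); this is checked pair by pair {z, w} (weight_amortized).
   Summing along the request sequence gives 2 MTF2 <= 5 OFF + Phi_initial
   (amortized_cost), which yields the theorem for an optimal OFF. *)

Section ListOrder.
Variable T : eqType.
Implicit Types (s L : seq T) (x y z w : T).

Definition bef L x y : bool := index x L < index y L.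

Lemma bef_irr L x : bef L x x = false.
Proof. exact: ltnn. Qed.

Lemma bef_tot L x y : x \in L -> y \in L -> x != y -> bef L y x = ~~ bef L x y.
Proof.
move=> xL yL xy; have : index x L != index y L by rewrite (inj_in_eq (@index_inj _ x L)).
by rewrite /bef; lia.
Qed.

Lemma count_index_lt L k : uniq L ->
  \sum_(w <- L) (index w L < k : nat) = minn k (size L).
Proof.
elim: L k => [|a L IH] k /=; first by rewrite big_nil minn0.
case/andP => aL uL; rewrite big_cons /= eqxx.
have -> : \sum_(w <- L) (index w (a :: L) < k : nat) =
          \sum_(w <- L) (index w L < k.-1 : nat).
  rewrite big_seq [RHS]big_seq; apply: eq_bigr => w wL /=.
  have aw : (a == w) = false by apply: contraNF aL => /eqP ->.
  by rewrite aw; case: k.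
by rewrite IH //; case: k => [|k] //=; lia.
Qed.

Lemma index_count s L z : uniq L -> perm_eq L s -> z \in L ->
  index z L = \sum_(w <- s) (bef L w z : nat).
Proof.
move=> uL pL zL; rewrite -(perm_big _ pL) /bef count_index_lt //.
by apply/esym/minn_idPl/ltnW; rewrite index_mem.
Qed.

(* [ins k z s] inserts z at position k of s; [move_to z k L] is by definition
   [ins k z (rem z L)]. *)
Definition ins k z s : seq T := take k s ++ z :: drop k s.

Lemma perm_ins k z s : perm_eq (ins k z s) (z :: s).
Proof. by rewrite /ins -cat1s perm_catCA /= cat_take_drop. Qed.

Lemma index_ins k z s x : x != z -> k <= size s ->
  index x (ins k z s) = index x s + (k <= index x s).
Proof.
move=> xz ks; rewrite /ins index_cat in_take_leq // /= eq_sym (negbTE xz).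
have := index_cat x (take k s) (drop k s).
by rewrite cat_take_drop in_take_leq // size_takel //; case: ltnP => h; lia.
Qed.

Lemma index_ins_self k z s : k <= size s -> z \notin s -> index z (ins k z s) = k.
Proof.
move=> ks zs; rewrite /ins index_cat size_takel // /= eqxx addn0.
by rewrite ifN // (contra (@mem_take _ _ _ _)).
Qed.

Lemma bef_ins k z s x y : k <= size s -> x != z -> y != z ->
  bef (ins k z s) x y = bef s x y.
Proof. by move=> ks xz yz; rewrite /bef !index_ins //; lia. Qed.

Lemma bef_ins_self k z s w : k <= size s -> z \notin s -> w != z ->
  bef (ins k z s) z w = (k <= index w s) /\ bef (ins k z s) w z = (index w s < k).
Proof. by move=> ks zs wz; rewrite /bef index_ins_self // index_ins //; split; lia. Qed.

Lemma ins_rem L z : uniq L -> z \in L -> L = ins (index z L) z (rem z L).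
Proof.
move=> uL zL; have iL : index z L <= size L by rewrite ltnW // index_mem.
rewrite /ins remE take_size_cat ?size_takel // drop_size_cat ?size_takel //.
by rewrite -drop_index // cat_take_drop.
Qed.

Section MoveForward.
Variables (L : seq T) (z : T) (k : nat).
Hypotheses (uL : uniq L) (zL : z \in L) (kz : k <= index z L).

Let z_notin_rem : z \notin rem z L.
Proof. by rewrite mem_rem_uniqF. Qed.

Let index_le_size : index z L <= size (rem z L).
Proof. by rewrite size_rem //; move: zL; rewrite -index_mem; lia. Qed.

Lemma move_to_perm : perm_eq (move_to z k L) L.
Proof. by rewrite (perm_trans (perm_ins _ _ _)) // perm_sym perm_to_rem. Qed.

Lemma move_to_bef x y : x != z -> y != z -> bef (move_to z k L) x y = bef L x y.
Proof. by move=> xz yz; rewrite {2}(ins_rem uL zL) !bef_ins // (leq_trans kz). Qed.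

Lemma move_to_bef_self w : w != z -> bef L z w -> bef (move_to z k L) z w.
Proof.
move=> wz; rewrite {1}(ins_rem uL zL).
have [-> _] := bef_ins_self index_le_size z_notin_rem wz.
have [-> _] := bef_ins_self (leq_trans kz index_le_size) z_notin_rem wz.
exact: leq_trans.
Qed.

End MoveForward.

Lemma move_to_front_bef L z w : uniq L -> w != z -> bef (move_to z 0 L) z w.
Proof.
by move=> uL wz; have [-> _] := bef_ins_self (leq0n _) (negbT (mem_rem_uniqF z uL)) wz.
Qed.

(* A paid exchange changes nothing, or changes the relative order of exactly
   one pair {a, b}: with s0 the list without b, it turns [ins j.+1 b s0] into
   [ins j b s0], and the only item of s0 at position j is a. *)
Lemma swap_adj_local L j : uniq L -> swap_adj L j = L \/
  exists a b, [/\ a \in L, perm_eq (swap_adj L j) L &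
    forall x y, ~~ ((x == a) && (y == b)) -> ~~ ((x == b) && (y == a)) ->
      bef (swap_adj L j) x y = bef L x y].
Proof.
move=> uL; rewrite /swap_adj; case E: (drop j L) => [|a [|b r]]; try by left.
right; exists a, b.
set P := take j L; set s0 := P ++ a :: r.
have sP : size P = j.
  by apply: size_takel; have := size_drop j L; rewrite E /=; lia.
have ELs : L = ins j.+1 b s0.
  rewrite /ins take_cat drop_cat sP ltnNge leqnSn /= subSnn /=.
  by rewrite -catA /= take0 drop0 -E cat_take_drop.
have ESs : P ++ b :: a :: r = ins j b s0 by rewrite /ins take_size_cat // drop_size_cat.
have [bs0 _] : b \notin s0 /\ uniq s0.
  by apply/andP; rewrite -[_ && _]/(uniq (b :: s0)) -(perm_uniq (perm_ins j.+1 b s0)) -ELs.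
have js0 : j.+1 <= size s0 by rewrite size_cat sP /= addnS ltnS leq_addr.
have not_at_j w : w != a -> index w s0 != j.
  move=> wa; apply: contraNneq wa => iw.
  have ws0 : w \in s0 by rewrite -index_mem iw.
  by apply/eqP; rewrite -(nth_index a ws0) iw nth_cat sP ltnn subnn.
split.
- by rewrite -(cat_take_drop j L) E mem_cat !inE eqxx orbT.
- by rewrite ESs [X in perm_eq _ X]ELs (perm_trans (perm_ins _ _ _)) // perm_sym perm_ins.
move=> x y nab nba; rewrite ESs [in RHS]ELs.
have [xb | xb] := eqVneq x b; have [yb | yb] := eqVneq y b.
- by rewrite xb yb !bef_irr.
- have ya : y != a by move: nba; rewrite xb eqxx.
  rewrite xb.
  have [-> _] := bef_ins_self (ltnW js0) bs0 yb.
  have [-> _] := bef_ins_self js0 bs0 yb.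
  by have := not_at_j y ya; lia.
- have xa : x != a by move: nab; rewrite yb eqxx andbT.
  rewrite yb.
  have [_ ->] := bef_ins_self (ltnW js0) bs0 xb.
  have [_ ->] := bef_ins_self js0 bs0 xb.
  by have := not_at_j x xa; lia.
- by rewrite !bef_ins // ltnW.
Qed.

End ListOrder.

Section ItemSums.
Variable T : eqType.
Implicit Types (s : seq T) (F : T -> T -> nat).

Lemma dsum_split s z F : uniq s -> z \in s -> F z z = 0 ->
  \sum_(x <- s) \sum_(y <- s) F x y =
  \sum_(x <- s | x != z) \sum_(y <- s | y != z) F x y +
  \sum_(w <- s | w != z) (F z w + F w z).
Proof.
move=> us zs Fzz.
rewrite (bigD1_seq z) //= (@bigD1_seq _ _ _ _ s z (F z)) //= Fzz add0n.
have -> : \sum_(x <- s | x != z) \sum_(y <- s) F x y =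
          \sum_(x <- s | x != z) (F x z + \sum_(y <- s | y != z) F x y).
  by apply: eq_bigr => x _; apply: bigD1_seq.
by rewrite !big_split /=; lia.
Qed.

Lemma sum_le_except s (P : pred T) b (G G' : T -> nat) c : uniq s ->
  (forall w, w != b -> G' w <= G w) -> G' b <= c ->
  \sum_(w <- s | P w) G' w <= \sum_(w <- s | P w) G w + c.
Proof.
move=> us HG Hb; elim: s us => [|x s IH] /=; first by rewrite !big_nil.
case/andP => xs us; rewrite !big_cons.
have [Exb | xb] := eqVneq x b; last by have := HG x xb; have := IH us; case: (P x); lia.
subst x; have rest : \sum_(w <- s | P w) G' w <= \sum_(w <- s | P w) G w.
  rewrite big_seq_cond [X in _ <= X]big_seq_cond; apply: leq_sum => w /andP[ws _].
  by apply: HG; apply: contraNneq xs => <-.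
by case: (P b); lia.
Qed.

End ItemSums.

Section Potential.
Variables (T : eqType) (s : seq T).
Implicit Types (LA LO : seq T) (bits : T -> bool) (x y : T).

(* Weight of a pair (x, y) with x in front of y in MTF2's list, given whether
   the pair is an inversion w.r.t. OFF's list and the bits bf of x, bb of y. *)
Definition weight (inv bf bb : bool) : nat := if inv then 4 + bf - 2 * bb else bb.


Definition pot LA LO bits x y : nat :=
  if bef LA x y then weight (bef LO y x) (bits x) (bits y) else 0.

Definition Phi LA LO bits : nat := \sum_(x <- s) \sum_(y <- s) pot LA LO bits x y.

Lemma pot_self LA LO bits x : pot LA LO bits x x = 0.
Proof. by rewrite /pot bef_irr. Qed.

Lemma pot_pair_le LA LO bits x y : pot LA LO bits x y + pot LA LO bits y x <= 5.
Proof.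
have wle : forall i bf bb, weight i bf bb <= 5 by case; case; case.
rewrite /pot /bef; case: ltngtP => // _; rewrite ?add0n ?addn0; exact: wle.
Qed.

Lemma Phi_bounded LA LO bits : Phi LA LO bits <= 5 * (size s * size s).
Proof.
rewrite /Phi; apply: (@leq_trans (\sum_(x <- s) \sum_(y <- s) 5)).
  apply: leq_sum => x _; apply: leq_sum => y _.
  by apply: leq_trans (pot_pair_le LA LO bits x y); apply: leq_addr.
by rewrite !big_const_seq !count_predT !iter_addn_0; lia.
Qed.

Lemma Phi_local LA LO LO' bits a b : uniq s -> a \in s ->
  (forall x y, ~~ ((x == a) && (y == b)) -> ~~ ((x == b) && (y == a)) ->
     bef LO' x y = bef LO x y) ->
  Phi LA LO' bits <= Phi LA LO bits + 5.
Proof.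
move=> us as_ same.
rewrite /Phi !(@dsum_split _ s a) ?pot_self // -addnA.
have -> : \sum_(x <- s | x != a) \sum_(y <- s | y != a) pot LA LO' bits x y =
          \sum_(x <- s | x != a) \sum_(y <- s | y != a) pot LA LO bits x y.
  apply: eq_bigr => x xa; apply: eq_bigr => y ya.
  by rewrite /pot same // ?(negbTE xa) ?(negbTE ya) ?andbF.
rewrite leq_add2l; apply: (@sum_le_except _ s _ b _ _ 5 us); last exact: pot_pair_le.
move=> w wb; have [-> | wa] := eqVneq w a; first by rewrite !pot_self.
by rewrite /pot !same // ?(negbTE wb) ?(negbTE wa) ?andbF ?andbT.
Qed.

End Potential.

(* The amortized inequality for a single pair {z, w} on an access to z:
   pA/pO say whether z is in front of w in MTF2's/OFF's list before the
   access, pA'/pO' after it, bz and bw are the bits.  MTF2 pays for w iff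
   ~~ pA, OFF iff ~~ pO; MTF2 flips the bit of z and moves z to the front iff
   bz; OFF may only move z forward. *)
Lemma weight_amortized (pA pO pA' pO' bz bw : bool) :
  bz ==> pA' -> ~~ bz ==> (pA' == pA) -> pO ==> pO' ->
  2 * (~~ pA) + ((if pA' then weight (~~ pO') (~~ bz) bw else 0) +
                 (if ~~ pA' then weight pO' bw (~~ bz) else 0)) <=
  5 * (~~ pO) + ((if pA then weight (~~ pO) bz bw else 0) +
                 (if ~~ pA then weight pO bw bz else 0)).
Proof. by case: pA; case: pO; case: pA'; case: pO'; case: bz; case: bw. Qed.

Definition flip_bit (T : eqType) (bits : T -> bool) (z y : T) : bool :=
  if y == z then ~~ bits z else bits y.

(* One access to z: LA, LO are the lists before it (OFF's after its paid
   exchanges), LA', LO' after it. *)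
Section Access.
Variables (T : eqType) (s LA LO LA' LO' : seq T) (bits : T -> bool) (z : T).
Hypotheses (us : uniq s) (zs : z \in s).
Hypotheses (pA : perm_eq LA s) (pO : perm_eq LO s) (pA' : perm_eq LA' s) (pO' : perm_eq LO' s).
Hypothesis sameA : forall x y, x != z -> y != z -> bef LA' x y = bef LA x y.
Hypothesis sameO : forall x y, x != z -> y != z -> bef LO' x y = bef LO x y.
Hypothesis frontA : bits z -> forall w, w != z -> bef LA' z w.
Hypothesis stayA : ~~ bits z -> LA' = LA.
Hypothesis forwardO : forall w, w != z -> bef LO z w -> bef LO' z w.

Lemma access_pair w : w \in s -> w != z ->
  2 * bef LA w z + (pot LA' LO' (flip_bit bits z) z w + pot LA' LO' (flip_bit bits z) w z) <=
  5 * bef LO w z + (pot LA LO bits z w + pot LA LO bits w z).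
Proof.
move=> ws wz; have zw : z != w by rewrite eq_sym.
have inL L : perm_eq L s -> z \in L /\ w \in L by move=> pL; rewrite !(perm_mem pL).
have [[zA wA] [zO wO]] := (inL _ pA, inL _ pO).
have [[zA' wA'] [zO' wO']] := (inL _ pA', inL _ pO').
rewrite /pot !(bef_tot _ _ zw) // /flip_bit eqxx (negbTE wz).
apply: weight_amortized.
- by apply/implyP => bz; apply: frontA.
- by apply/implyP => bz; rewrite (stayA bz).
- by apply/implyP; apply: forwardO.
Qed.

(* Amortized cost of an access: pairs avoiding z keep their weight. *)
Lemma Phi_access :
  2 * index z LA + Phi s LA' LO' (flip_bit bits z) <= 5 * index z LO + Phi s LA LO bits.
Proof.
have uA : uniq LA by rewrite (perm_uniq pA).
have uO : uniq LO by rewrite (perm_uniq pO).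
rewrite (index_count uA pA) ?(perm_mem pA) // (index_count uO pO) ?(perm_mem pO) //.
rewrite /Phi !(@dsum_split _ s z) ?pot_self // !(bigD1_seq z) //= !bef_irr !add0n.
have -> : \sum_(x <- s | x != z) \sum_(y <- s | y != z) pot LA' LO' (flip_bit bits z) x y =
          \sum_(x <- s | x != z) \sum_(y <- s | y != z) pot LA LO bits x y.
  apply: eq_bigr => x xz; apply: eq_bigr => y yz.
  by rewrite /pot sameA // sameO // /flip_bit (negbTE xz) (negbTE yz).
rewrite addnCA [X in _ <= X]addnCA leq_add2l !big_distrr -!big_split /=.
rewrite big_seq_cond [X in _ <= X]big_seq_cond.
by apply: leq_sum => w /andP[]; apply: access_pair.
Qed.

End Access.

Section Amortization.
Variables (T : eqType) (s : seq T).
Hypothesis us : uniq s.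

Lemma Phi_swap LA LO bits j : perm_eq LO s ->
  perm_eq (swap_adj LO j) s /\ Phi s LA (swap_adj LO j) bits <= Phi s LA LO bits + 5.
Proof.
move=> pO; have uO : uniq LO by rewrite (perm_uniq pO).
have [-> | [a [b [aO pS same]]]] := swap_adj_local j uO; first by split => //; lia.
split; first exact: perm_trans pS pO.
by apply: (Phi_local _ _ us _ same); rewrite -(perm_mem pO).
Qed.

Lemma Phi_swaps LA bits sw : forall LO, perm_eq LO s ->
  perm_eq (foldl (@swap_adj T) LO sw) s /\
  Phi s LA (foldl (@swap_adj T) LO sw) bits <= Phi s LA LO bits + 5 * size sw.
Proof.
elim: sw => [|j sw IH] LO pO /=; first by split => //; lia.
have [pS HS] := Phi_swap LA bits j pO.
have [pF HF] := IH _ pS; split => //; lia.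
Qed.

Theorem amortized_cost full (S : nat -> step) sigma : forall t LA LO bits,
  perm_eq LA s -> perm_eq LO s -> all (fun x => x \in s) sigma ->
  2 * mtf2_cost full LA bits sigma <= 5 * off_cost full S t LO sigma + Phi s LA LO bits.
Proof.
elim: sigma => [|z sigma IH] t LA LO bits pA pO /=; first lia.
case/andP => zs alls.
have [pO1 Hsw] := Phi_swaps LA bits (S t).1 pO.
set LO1 := foldl (@swap_adj T) LO (S t).1 in pO1 Hsw *.
set LO' := move_to z (minn (S t).2 (index z LO1)) LO1.
set LA' := if ~~ bits z then LA else move_to z 0 LA.
have uA : uniq LA by rewrite (perm_uniq pA).
have uO1 : uniq LO1 by rewrite (perm_uniq pO1).
have zA : z \in LA by rewrite (perm_mem pA).
have zO1 : z \in LO1 by rewrite (perm_mem pO1).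
have kz := geq_minr (S t).2 (index z LO1).
have pO' : perm_eq LO' s by apply: perm_trans (move_to_perm _ zO1) pO1.
have pA' : perm_eq LA' s.
  by rewrite /LA'; case: (bits z) => //; apply: perm_trans (move_to_perm _ zA) pA.
have acc : 2 * index z LA + Phi s LA' LO' (flip_bit bits z) <=
           5 * index z LO1 + Phi s LA LO1 bits.
  apply: Phi_access => //.
  - by rewrite /LA'; case: (bits z) => //= x y; apply: move_to_bef.
  - exact: move_to_bef.
  - by rewrite /LA' => -> w; apply: move_to_front_bef.
  - by rewrite /LA' => ->.
  - exact: move_to_bef_self.
have := IH t.+1 LA' LO' (flip_bit bits z) pA' pO' alls.
by move: acc; rewrite /access_cost /flip_bit; lia.
Qed.

End Amortization.

Lemma OPT_attained (T : eqType) full (L sigma : seq T) :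
  exists S, off_cost full S 0 L sigma = OPT full L sigma.
Proof.
rewrite /OPT; case: ex_minnP => n; rewrite /achievableb.
by case: excluded_middle_informative => // [[S HS]] _ _; exists S.
Qed.

Import GRing.Theory Num.Theory.
Local Open Scope ring_scope.

Theorem lemma12 (l : nat) :
  exists b : rat,
    forall (T : eqType) (L0 : seq T) (bits0 : T -> bool) (full : bool)
           (sigma : seq T),
      size L0 = l -> uniq L0 -> all (fun x => x \in L0) sigma ->
      (mtf2_cost full L0 bits0 sigma)%:R <= (5%:R / 2%:R) * (OPT full L0 sigma)%:R + b.
Proof.
exists ((5 * (l * l))%N%:R / 2%:R) => T L0 bits0 full sigma sL uL allL.
have [S optS] := OPT_attained full L0 sigma.
have amort :=
  @amortized_cost T L0 uL full S sigma 0 L0 L0 bits0 (perm_refl _) (perm_refl _) allL.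
have PhiB := Phi_bounded L0 L0 L0 bits0; rewrite sL in PhiB.
have : (2 * mtf2_cost full L0 bits0 sigma <= 5 * OPT full L0 sigma + 5 * (l * l))%N.
  by rewrite -optS; apply: leq_trans amort _; rewrite leq_add2l.
rewrite -(ler_nat rat) !natrD !natrM; lra.
Qed.
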